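(* For distinct $a,b\in\mathbb{B}^2$, $h_{\mathbb{B}^2}(a,b)=\log H$, where $$H=\frac{\operatorname{Re}\big((1-a\overline{b})^2\big)+|a-b|^2+2\,\operatorname{Re}(1-a\overline{b})\sqrt{|a-b|^2-\big(\operatorname{Im}(a\overline{b})\big)^2}}{(1-|a|^2)(1-|b|^2)}.$$
   Context: $\mathbb{B}^2$ is the open unit disk in $\mathbb{C}$. For distinct $a,b\in\mathbb{B}^2$ the Hilbert metric is $h_{\mathbb{B}^2}(a,b)=\log\frac{|u-b||a-v|}{|u-a||b-v|}$, where $u,v$ are the two intersection points of the line $L[a,b]$ through $a,b$ with the unit circle, labelled so that $|u-a|<|u-b|$. *)

From Stdlib Require Import Reals ClassicalEpsilon.
From Coquelicot Require Import Coquelicot.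
Open Scope R_scope.

Definition in_B2 (z : C) : Prop := Cmod z < 1.

Definition on_line (a b z : C) : Prop :=
  exists t : R, z = Cplus a (Cmult (RtoC t) (Cminus b a)).

Definition hilbert_ends (a b : C) (uv : C * C) : Prop :=
  let (u, v) := uv in
  on_line a b u /\ on_line a b v /\ Cmod u = 1 /\ Cmod v = 1 /\ u <> v /\
  Cmod (Cminus u a) < Cmod (Cminus u b).

Definition hilbert_uv (a b : C) : C * C :=
  epsilon (inhabits (RtoC 0, RtoC 0)) (hilbert_ends a b).

Definition hB2 (a b : C) : R :=
  let (u, v) := hilbert_uv a b in
  ln ((Cmod (Cminus u b) * Cmod (Cminus a v)) /
      (Cmod (Cminus u a) * Cmod (Cminus b v))).

(* Parametrise the chord through a and b as z(t) = a + t (b - a).  Then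
   |z(t)|^2 - 1 is a real quadratic p(t) = A t^2 + 2 B t + C with p(0) = |a|^2 - 1 < 0
   and p(1) = |b|^2 - 1 < 0, so its roots satisfy t1 < 0 < 1 < t2, and the labelling
   |u - a| < |u - b| forces u = z(t1), v = z(t2).  Distances along the chord are
   |t - t'| |b - a|, so the cross ratio is (1 - t1) t2 / ((-t1)(t2 - 1)), which Vieta
   turns into (E + s)^2 / (p(0) p(1)) with s = sqrt (B^2 - A C) and E = -(B + C);
   finally E = Re (1 - a conj b) and s^2 = |a - b|^2 - Im (a conj b)^2. *)
From Stdlib Require Import Reals Lra Psatz ClassicalEpsilon.
From Coquelicot Require Import Coquelicot.
Open Scope R_scope.

Definition quad_root_lo (A B C : R) : R := (- B - sqrt (B ^ 2 - A * C)) / A.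
Definition quad_root_hi (A B C : R) : R := (- B + sqrt (B ^ 2 - A * C)) / A.

Section RealQuadratic.

Variables A B C : R.
Hypotheses (A_gt0 : 0 < A) (C_lt0 : C < 0) (ABC_lt0 : A + 2 * B + C < 0).

Let s := sqrt (B ^ 2 - A * C).
Let t1 := quad_root_lo A B C.
Let t2 := quad_root_hi A B C.

Let s_gt0 : 0 < s.
Proof. apply sqrt_lt_R0; nra. Qed.

Let s_sq : s * s = B ^ 2 - A * C.
Proof. apply sqrt_sqrt; nra. Qed.

Let A_t1 : A * t1 = - B - s.
Proof. unfold t1, quad_root_lo, s; field; lra. Qed.

Let A_t2 : A * t2 = - B + s.
Proof. unfold t2, quad_root_hi, s; field; lra. Qed.

Lemma quad_root_lo_lt0 : quad_root_lo A B C < 0.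
Proof.
  fold t1; assert (s > - B) by nra.
  apply (Rmult_lt_reg_l A); lra.
Qed.

Lemma quad_root_hi_gt1 : 1 < quad_root_hi A B C.
Proof.
  fold t2; assert (s > A + B) by nra.
  apply (Rmult_lt_reg_l A); lra.
Qed.

Lemma quad_factor t : A * t ^ 2 + 2 * B * t + C = A * (t - t1) * (t - t2).
Proof.
  apply (Rmult_eq_reg_l A); [| lra].
  transitivity (A * A * t ^ 2 - A * t * (A * t1 + A * t2) + (A * t1) * (A * t2)).
  - rewrite A_t1, A_t2; replace ((- B - s) * (- B + s)) with (B ^ 2 - s * s) by ring.
    rewrite s_sq; ring.
  - ring.
Qed.

Lemma quad_eq0_iff t :
  A * t ^ 2 + 2 * B * t + C = 0 <-> t = quad_root_lo A B C \/ t = quad_root_hi A B C.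
Proof.
  fold t1 t2; rewrite quad_factor; split.
  - intros H; destruct (Rmult_integral _ _ H) as [H1 | H1];
      [destruct (Rmult_integral _ _ H1) |]; lra.
  - intros [-> | ->]; ring.
Qed.

(* With E = -(B + C), Vieta gives A (1 - t1) t2 = E + s, A (-t1) (t2 - 1) = E - s,
   and (E + s) (E - s) = C (A + 2 B + C). *)
Lemma quad_cross_ratio :
  (1 - t1) * t2 / (- t1 * (t2 - 1)) = (s - (B + C)) ^ 2 / (C * (A + 2 * B + C)).
Proof.
  pose proof quad_root_lo_lt0 as t1_lt0; pose proof quad_root_hi_gt1 as t2_gt1.
  fold t1 t2 in t1_lt0, t2_gt1.
  assert (num_eq : A * ((1 - t1) * t2) = s - (B + C)).
  { apply (Rmult_eq_reg_l A); [| lra].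
    replace (A * (A * ((1 - t1) * t2))) with ((A - A * t1) * (A * t2)) by ring.
    rewrite A_t1, A_t2; nra. }
  assert (den_eq : A * (- t1 * (t2 - 1)) = - (B + C) - s).
  { apply (Rmult_eq_reg_l A); [| lra].
    replace (A * (A * (- t1 * (t2 - 1)))) with (- (A * t1) * (A * t2 - A)) by ring.
    rewrite A_t1, A_t2; nra. }
  assert (E_sub_s_gt0 : - (B + C) - s > 0) by nra.
  transitivity ((s - (B + C)) / (- (B + C) - s)).
  - rewrite <- num_eq, <- den_eq; field; split; lra.
  - replace (C * (A + 2 * B + C)) with ((s - (B + C)) * (- (B + C) - s)) by nra.
    field; lra.
Qed.

End RealQuadratic.

Definition line_pt (a b : C) (t : R) : C := Cplus a (Cmult (RtoC t) (Cminus b a)).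

Lemma line_pt_1 (a b : C) : line_pt a b 1 = b.
Proof. unfold line_pt; ring. Qed.

Lemma Cmod_sub_sym (x y : C) : Cmod (Cminus x y) = Cmod (Cminus y x).
Proof. rewrite <- Cmod_opp; f_equal; ring. Qed.

Lemma Cmod_line_pt_sub_l (a b : C) (t : R) :
  Cmod (Cminus (line_pt a b t) a) = Rabs t * Cmod (Cminus b a).
Proof. rewrite <- Cmod_R, <- Cmod_mult; f_equal; unfold line_pt; ring. Qed.

Lemma Cmod_line_pt_sub_r (a b : C) (t : R) :
  Cmod (Cminus (line_pt a b t) b) = Rabs (t - 1) * Cmod (Cminus b a).
Proof. rewrite <- Cmod_R, RtoC_minus, <- Cmod_mult; f_equal; unfold line_pt; ring. Qed.

Lemma line_pt_inj (a b : C) (t t' : R) :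
  a <> b -> line_pt a b t = line_pt a b t' -> t = t'.
Proof.
  intros Hab Heq.
  assert (H0 : Cmult (RtoC (t - t')) (Cminus b a) = 0).
  { rewrite RtoC_minus; unfold line_pt in Heq.
    transitivity (Cminus (Cplus a (Cmult (RtoC t) (Cminus b a)))
                         (Cplus a (Cmult (RtoC t') (Cminus b a)))); [ring |].
    rewrite Heq; ring. }
  apply (f_equal Cmod) in H0; rewrite Cmod_mult, Cmod_R, Cmod_0 in H0.
  destruct (Rmult_integral _ _ H0) as [H | H].
  - destruct (Rcase_abs (t - t')); [rewrite Rabs_left in H | rewrite Rabs_right in H]; lra.
  - apply Cmod_eq_0 in H; exfalso; apply Hab.
    replace b with (Cplus a (Cminus b a)) by ring; rewrite H; ring.
Qed.

Definition chord_A (a b : C) : R := Cmod (Cminus b a) ^ 2.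
Definition chord_B (a b : C) : R := Re (Cmult a (Cconj (Cminus b a))).
Definition chord_C (a : C) : R := Cmod a ^ 2 - 1.

Lemma Cmod_line_pt_sq (a b : C) (t : R) :
  Cmod (line_pt a b t) ^ 2 - 1 = chord_A a b * t ^ 2 + 2 * chord_B a b * t + chord_C a.
Proof.
  unfold chord_A, chord_B, chord_C, line_pt; rewrite !Cmod2_alt.
  destruct a, b; simpl; ring.
Qed.

Lemma chord_ABC (a b : C) : chord_A a b + 2 * chord_B a b + chord_C a = Cmod b ^ 2 - 1.
Proof. pose proof (Cmod_line_pt_sq a b 1) as H; rewrite line_pt_1 in H; lra. Qed.

Lemma chord_disc (a b : C) :
  chord_B a b ^ 2 - chord_A a b * chord_C a
  = Cmod (Cminus a b) ^ 2 - Im (Cmult a (Cconj b)) ^ 2.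
Proof. unfold chord_A, chord_B, chord_C; rewrite !Cmod2_alt; destruct a, b; simpl; ring. Qed.

Lemma chord_BC (a b : C) : - (chord_B a b + chord_C a) = Re (Cminus 1 (Cmult a (Cconj b))).
Proof. unfold chord_B, chord_C; rewrite Cmod2_alt; destruct a, b; simpl; ring. Qed.

Lemma Cmod_eq1_iff (z : C) : Cmod z = 1 <-> Cmod z ^ 2 - 1 = 0.
Proof.
  pose proof (Cmod_ge_0 z); split; intros H'.
  - rewrite H'; ring.
  - nra.
Qed.

Lemma Cmod_sq_lt1 (z : C) : in_B2 z -> Cmod z ^ 2 < 1.
Proof. unfold in_B2; pose proof (Cmod_ge_0 z); nra. Qed.

Section Chord.

Variables a b : C.
Hypotheses (a_in : in_B2 a) (b_in : in_B2 b) (a_neq_b : a <> b).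

Let t1 := quad_root_lo (chord_A a b) (chord_B a b) (chord_C a).
Let t2 := quad_root_hi (chord_A a b) (chord_B a b) (chord_C a).

Let Cmod_ba_gt0 : 0 < Cmod (Cminus b a).
Proof.
  apply Cmod_gt_0; intros H; apply a_neq_b.
  replace b with (Cplus a (Cminus b a)) by ring; rewrite H; ring.
Qed.

Lemma chord_A_gt0 : 0 < chord_A a b.
Proof. apply pow_lt, Cmod_ba_gt0. Qed.

Lemma chord_C_lt0 : chord_C a < 0.
Proof. unfold chord_C; pose proof (Cmod_sq_lt1 a a_in); lra. Qed.

Lemma chord_ABC_lt0 : chord_A a b + 2 * chord_B a b + chord_C a < 0.
Proof. rewrite chord_ABC; pose proof (Cmod_sq_lt1 b b_in); lra. Qed.

Let t1_lt0 : t1 < 0.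
Proof. exact (quad_root_lo_lt0 _ _ _ chord_A_gt0 chord_C_lt0). Qed.

Let t2_gt1 : 1 < t2.
Proof. exact (quad_root_hi_gt1 _ _ _ chord_A_gt0 chord_C_lt0 chord_ABC_lt0). Qed.

Lemma line_pt_on_circle_iff t : Cmod (line_pt a b t) = 1 <-> t = t1 \/ t = t2.
Proof.
  rewrite Cmod_eq1_iff, Cmod_line_pt_sq.
  exact (quad_eq0_iff _ _ _ chord_A_gt0 chord_C_lt0 t).
Qed.

Lemma line_pt_closer_to_a_iff t :
  Cmod (Cminus (line_pt a b t) a) < Cmod (Cminus (line_pt a b t) b) <-> t < 1 / 2.
Proof.
  rewrite Cmod_line_pt_sub_l, Cmod_line_pt_sub_r; split; intros H.
  - apply Rmult_lt_reg_r in H; [| exact Cmod_ba_gt0].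
    apply Rsqr_lt_abs_1 in H; unfold Rsqr in H; nra.
  - apply Rmult_lt_compat_r; [exact Cmod_ba_gt0 |].
    apply Rsqr_lt_abs_0; unfold Rsqr; nra.
Qed.

Lemma hilbert_ends_chord : hilbert_ends a b (line_pt a b t1, line_pt a b t2).
Proof.
  repeat split.
  - exists t1; reflexivity.
  - exists t2; reflexivity.
  - apply line_pt_on_circle_iff; left; reflexivity.
  - apply line_pt_on_circle_iff; right; reflexivity.
  - intros H; apply line_pt_inj in H; [lra | exact a_neq_b].
  - apply line_pt_closer_to_a_iff; lra.
Qed.

Lemma hilbert_ends_chord_unique u v :
  hilbert_ends a b (u, v) -> u = line_pt a b t1 /\ v = line_pt a b t2.
Proof.
  intros ([tu ->] & [tv ->] & Hu & Hv & Huv & Hlt).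
  apply line_pt_closer_to_a_iff in Hlt.
  apply line_pt_on_circle_iff in Hu, Hv.
  destruct Hu as [-> | ->]; [| lra].
  destruct Hv as [-> | ->]; [contradiction | auto].
Qed.

Lemma hilbert_uv_chord : hilbert_uv a b = (line_pt a b t1, line_pt a b t2).
Proof.
  unfold hilbert_uv.
  destruct (epsilon _ _) as [u v] eqn:E.
  pose proof (epsilon_spec (inhabits (RtoC 0, RtoC 0)) _ (ex_intro _ _ hilbert_ends_chord)) as H.
  rewrite E in H; apply hilbert_ends_chord_unique in H as [-> ->]; reflexivity.
Qed.

Lemma hB2_chord : hB2 a b = ln ((1 - t1) * t2 / (- t1 * (t2 - 1))).
Proof.
  unfold hB2; rewrite hilbert_uv_chord, (Cmod_sub_sym a), (Cmod_sub_sym b).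
  rewrite !Cmod_line_pt_sub_l, !Cmod_line_pt_sub_r.
  rewrite (Rabs_left t1), (Rabs_left (t1 - 1)), (Rabs_right t2), (Rabs_right (t2 - 1)) by lra.
  f_equal; field; repeat split; lra.
Qed.

End Chord.

Theorem mainTheorem5 (a b : C) :
  in_B2 a -> in_B2 b -> a <> b ->
  (exists uv : C * C, hilbert_ends a b uv) /\
  hB2 a b =
    ln ((Re (Cmult (Cminus 1 (Cmult a (Cconj b))) (Cminus 1 (Cmult a (Cconj b))))
         + (Cmod (Cminus a b)) ^ 2
         + 2 * Re (Cminus 1 (Cmult a (Cconj b)))
             * sqrt ((Cmod (Cminus a b)) ^ 2 - (Im (Cmult a (Cconj b))) ^ 2))
        / ((1 - (Cmod a) ^ 2) * (1 - (Cmod b) ^ 2))).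
Proof.
  intros a_in b_in a_neq_b.
  split; [eexists; exact (hilbert_ends_chord a b a_in b_in a_neq_b) |].
  pose proof (chord_A_gt0 a b a_neq_b) as A_gt0.
  pose proof (chord_C_lt0 a a_in) as C_lt0.
  rewrite (hB2_chord a b a_in b_in a_neq_b).
  rewrite (quad_cross_ratio _ _ _ A_gt0 C_lt0 (chord_ABC_lt0 a b b_in)).
  assert (disc_ge0 : 0 <= chord_B a b ^ 2 - chord_A a b * chord_C a) by nra.
  assert (s_sq := pow2_sqrt _ disc_ge0).
  assert (Re_w_sq : Re (Cmult (Cminus 1 (Cmult a (Cconj b))) (Cminus 1 (Cmult a (Cconj b))))
                    = Re (Cminus 1 (Cmult a (Cconj b))) ^ 2 - Im (Cmult a (Cconj b)) ^ 2)
    by (destruct a, b; simpl; ring).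
  rewrite chord_disc in s_sq |- *; rewrite chord_ABC, Re_w_sq, <- chord_BC.
  unfold chord_C; f_equal; f_equal; nra.
Qed.
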